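(* Let $f$ be an $(n-1)$-variable Boolean function and let $\bar f$ be the $n$-variable Boolean function $\bar f(x_1,\dots,x_n)=x_n+f(x_1,\dots,x_{n-1})$. Then $$\min({FAI}(f),{FAI}(1+f)+1)\le{FAI}(\bar f)\le\mathcal{FAI}(f)+2.$$
   Context: An $m$-variable Boolean function is a map $\mathbb{F}_2^m\to\mathbb{F}_2$, with algebraic degree $\deg$ the degree of its algebraic normal form. For $h$ an $m$-variable function, ${AN}^c(h)$ is the set of $g$ with $h\cdot g\neq0$, ${FAI}(h)$ is the minimum of $\deg(g)+\deg(h\cdot g)$ over $g\in{AN}^c(h)$, $g\neq 1$, and $\mathcal{FAI}(h)=\min({FAI}(h),{FAI}(1+h))$. *)

From mathcomp Require Import all_boot.
Set Implicit Arguments. Unset Strict Implicit. Unset Printing Implicit Defensive.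

Definition point (m : nat) := {ffun 'I_m -> bool}.
Definition BF (m : nat) := {ffun point m -> bool}.

(* Evaluation of the polynomial  sum_{S in A} prod_{i in S} x_i  over F_2,
   where A is a set of monomials (each monomial = set of variable indices). *)
Definition anf_eval (m : nat) (A : {set {set 'I_m}}) (x : point m) : bool :=
  odd #|[set S in A | [forall i in S, x i]]|.

Definition is_anf (m : nat) (f : BF m) (A : {set {set 'I_m}}) : bool :=
  [forall x, anf_eval A x == f x].

(* Algebraic degree: the degree of the ANF (max size of a monomial in it).
   Since the ANF exists and is unique, taking the minimum over all
   representations A gives exactly the degree of the ANF. *)
Definition bdeg (m : nat) (f : BF m) : nat :=
  \big[minn/m]_(A : {set {set 'I_m}} | is_anf f A) \max_(S in A) #|S|.

Definition bconst (m : nat) (b : bool) : BF m := [ffun _ => b].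
Definition bmul (m : nat) (h g : BF m) : BF m := [ffun x => h x && g x].
Definition bcompl (m : nat) (h : BF m) : BF m := [ffun x => ~~ h x].

(* FAI(h) = min { deg g + deg (h g) : h g <> 0, g <> 1 }.
   The default 2m+1 (above any attainable value) only matters when the set
   is empty, which never happens for nonconstant h. *)
Definition FAI (m : nat) (h : BF m) : nat :=
  \big[minn/(m.*2).+1]_(g : BF m | (bmul h g != bconst m false)
                                   && (g != bconst m true))
     (bdeg g + bdeg (bmul h g)).

Definition FAIc (m : nat) (h : BF m) : nat := minn (FAI h) (FAI (bcompl h)).

Definition fbar (m : nat) (f : BF m) : BF m.+1 :=
  [ffun x : point m.+1 =>
     xorb (x ord_max) (f [ffun i : 'I_m => x (widen_ord (leqnSn m) i)])].

(* Split off the last variable: every H : BF n.+1 is bjoin h0 h1, where h0 and h1 are its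
   restrictions to x_{n+1} = 0 and x_{n+1} = 1, and its ANF is the Davio expansion
   B0 + x_{n+1} B1 of ANFs B0 of h0 and B1 of the derivative h0 + h1.  Hence restrictions do
   not raise the degree, a nonzero derivative has strictly smaller degree, and
   deg (bjoin h0 h1) <= max (deg h0) (deg (h0 + h1) + 1).

   Now fbar f = bjoin f (1 + f), so a candidate G = bjoin a b for FAI (fbar f) satisfies
   fbar f * G = bjoin (f a) ((1 + f) b).  For the upper bound, a candidate g for f or for 1 + f
   yields G = bjoin g 0 or G = bjoin 0 g, raising each degree by at most one.  For the lower
   bound, either a is a candidate for f, or a = 1, or f a = 0.  In the last two cases the
   derivative of G or of fbar f * G is nonzero and pays for the extra one, while b, 1 + a or
   1 + b is a candidate for 1 + f or f; the exceptions G = x_{n+1} and G = 1 + x_{n+1} are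
   covered by FAI f <= deg f + 2. *)

From mathcomp Require Import all_boot order zify.
Import Order.TTheory.

Set Implicit Arguments. Unset Strict Implicit. Unset Printing Implicit Defensive.

Section Points.
Variable n : nat.

(* Written with widen_ord, as in fbar, so that fbar_bjoin holds by computation. *)
Definition ptrunc (y : point n.+1) : point n := [ffun i => y (widen_ord (leqnSn n) i)].

Definition prcons (x : point n) (b : bool) : point n.+1 :=
  [ffun j => if unlift ord_max j is Some i then x i else b].

Lemma widen_ord_lift (i : 'I_n) : widen_ord (leqnSn n) i = lift ord_max i.
Proof. by apply: val_inj; rewrite /= /bump leqNgt ltn_ord. Qed.

Lemma prcons_max x b : prcons x b ord_max = b.
Proof. by rewrite ffunE unlift_none. Qed.

Lemma prcons_lift x b i : prcons x b (lift ord_max i) = x i.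
Proof. by rewrite ffunE liftK. Qed.

Lemma ptrunc_rcons x b : ptrunc (prcons x b) = x.
Proof. by apply/ffunP => i; rewrite ffunE widen_ord_lift prcons_lift. Qed.

Lemma prcons_trunc y : prcons (ptrunc y) (y ord_max) = y.
Proof.
apply/ffunP => j; rewrite ffunE.
by case: (unliftP ord_max j) => [i ->|->] //; rewrite ffunE widen_ord_lift.
Qed.

End Points.

(** * Algebraic normal forms and the last variable *)

Definition meval m (S : {set 'I_m}) (x : point m) : bool := [forall i in S, x i].

Section Monomials.
Variable n : nat.
Implicit Types (S : {set 'I_n}) (T : {set 'I_n.+1}).

Definition mlift S : {set 'I_n.+1} := lift ord_max @: S.
Definition mliftX S : {set 'I_n.+1} := ord_max |: mlift S.
Definition munlift T : {set 'I_n} := lift ord_max @^-1: T.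

Lemma ord_max_notin_mlift S : ord_max \notin mlift S.
Proof. by apply/imsetP => -[i _ /eqP]; rewrite (negbTE (neq_lift _ _)). Qed.

Lemma munlift_mlift S : munlift (mlift S) = S.
Proof. by apply/setP => i; rewrite inE mem_imset //; apply: lift_inj. Qed.

Lemma munlift_mliftX S : munlift (mliftX S) = S.
Proof.
by apply/setP => i; rewrite !inE eq_sym (negbTE (neq_lift _ _)) mem_imset //; apply: lift_inj.
Qed.

Lemma mlift_munlift T : ord_max \notin T -> mlift (munlift T) = T.
Proof.
move=> maxT; apply/setP => j; case: (unliftP ord_max j) => [i ->|->].
  by rewrite mem_imset ?inE //; apply: lift_inj.
by rewrite (negbTE maxT) (negbTE (ord_max_notin_mlift _)).
Qed.

Lemma mliftX_munlift T : ord_max \in T -> mliftX (munlift T) = T.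
Proof.
move=> maxT; apply/setP => j; rewrite in_setU1; case: (unliftP ord_max j) => [i ->|->].
  by rewrite eq_sym (negbTE (neq_lift _ _)) mem_imset ?inE //; apply: lift_inj.
by rewrite eqxx maxT.
Qed.

Lemma mlift_inj : injective mlift.
Proof. exact: can_inj munlift_mlift. Qed.

Lemma mliftX_inj : injective mliftX.
Proof. exact: can_inj munlift_mliftX. Qed.

Lemma card_mlift S : #|mlift S| = #|S|.
Proof. by rewrite card_imset //; apply: lift_inj. Qed.

Lemma card_mliftX S : #|mliftX S| = #|S|.+1.
Proof. by rewrite cardsU1 ord_max_notin_mlift card_mlift. Qed.

Lemma meval_mlift S x b : meval (mlift S) (prcons x b) = meval S x.
Proof.
apply/forall_inP/forall_inP => [H i iS | H _ /imsetP[i iS ->]].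
  by rewrite -(prcons_lift x b); apply: H; apply: imset_f.
by rewrite prcons_lift; apply: H.
Qed.

Lemma meval_mliftX S x b : meval (mliftX S) (prcons x b) = b && meval S x.
Proof.
rewrite -(meval_mlift S x b); apply/forall_inP/andP => [H | [xb /forall_inP H] j].
  split; first by rewrite -(prcons_max x b); apply: H; apply: setU11.
  by apply/forall_inP => j jS; apply: H; apply: setU1r.
by rewrite in_setU1 => /predU1P[->|]; [rewrite prcons_max | apply: H].
Qed.

End Monomials.

Definition anf_sum n (A : {set {set 'I_n}}) (x : point n) : bool :=
  \big[addb/false]_(S in A) meval S x.

Definition anf_deg n (A : {set {set 'I_n}}) : nat := \max_(S in A) #|S|.

Lemma anf_evalE n (A : {set {set 'I_n}}) x : anf_eval A x = anf_sum A x.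
Proof.
rewrite /anf_eval -sum1_card (big_morph odd oddD (erefl : odd 0 = false)) /anf_sum.
rewrite big_mkcond [RHS]big_mkcond; apply: eq_bigr => S _; rewrite inE /meval.
by case: (S \in A) => //=; case: [forall i in S, x i].
Qed.

Lemma is_anfP n (h : BF n) A : reflect (forall x, anf_sum A x = h x) (is_anf h A).
Proof.
apply: (iffP forallP) => H x; first by rewrite -anf_evalE; apply/eqP.
by rewrite anf_evalE H.
Qed.

Lemma anf_bconst n b : is_anf (bconst n b) (if b then [set set0] else set0).
Proof.
apply/is_anfP => x; rewrite ffunE /anf_sum; case: b; last by rewrite big_set0.
by rewrite big_set1; apply/forall_inP => i; rewrite inE.
Qed.

Lemma anf_deg_le n (A : {set {set 'I_n}}) : anf_deg A <= n.
Proof. by apply/bigmax_leqP => S _; apply: leq_trans (max_card S) _; rewrite card_ord. Qed.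

Section ANFLift.
Variable n : nat.
Implicit Types (A : {set {set 'I_n.+1}}) (B C : {set {set 'I_n}}).

Definition anf_low A : {set {set 'I_n}} := @mlift n @^-1: A.
Definition anf_high A : {set {set 'I_n}} := @mliftX n @^-1: A.
Definition anf_davio B C : {set {set 'I_n.+1}} := @mlift n @: B :|: @mliftX n @: C.

Lemma anf_sum_prcons A x b :
  anf_sum A (prcons x b) = anf_sum (anf_low A) x (+) b && anf_sum (anf_high A) x.
Proof.
rewrite /anf_sum (bigID (fun T : {set 'I_n.+1} => ord_max \in T)) /= addbC; congr addb.
  rewrite (reindex_onto (@mlift n) (@munlift n)) /=; last first.
    by move=> T /andP[_ /mlift_munlift].
  apply: eq_big => [S|S _]; last by rewrite meval_mlift.
  by rewrite inE ord_max_notin_mlift munlift_mlift eqxx !andbT.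
rewrite (reindex_onto (@mliftX n) (@munlift n)) /=; last first.
  by move=> T /andP[_ /mliftX_munlift].
rewrite (eq_big (mem (anf_high A)) (fun S => b && meval S x)) => [|S|S _].
- by case: b => //; rewrite big1.
- by rewrite /mliftX setU11 -/(mliftX S) munlift_mliftX eqxx !andbT !inE.
- exact: meval_mliftX.
Qed.

Lemma anf_low_davio B C : anf_low (anf_davio B C) = B.
Proof.
apply/setP => S; rewrite !inE (mem_imset _ _ (@mlift_inj n)).
case: (S \in B) => //; apply/imsetP => -[T _ eqST].
by have := ord_max_notin_mlift S; rewrite eqST setU11.
Qed.

Lemma anf_high_davio B C : anf_high (anf_davio B C) = C.
Proof.
apply/setP => S; rewrite !inE (mem_imset _ _ (@mliftX_inj n)) orbC.
case: (S \in C) => //; apply/imsetP => -[T _ eqST].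
by have := ord_max_notin_mlift T; rewrite -eqST setU11.
Qed.

Lemma anf_deg_low A : anf_deg (anf_low A) <= anf_deg A.
Proof.
apply/bigmax_leqP => S; rewrite inE => SA.
by rewrite -card_mlift; apply: leq_bigmax_cond.
Qed.

Lemma anf_deg_high_mem A S : S \in anf_high A -> #|S|.+1 <= anf_deg A.
Proof. by rewrite inE -card_mliftX; apply: leq_bigmax_cond. Qed.

Lemma anf_deg_davio B C :
  anf_deg (anf_davio B C) <= maxn (anf_deg B) (anf_deg C).+1.
Proof.
apply/bigmax_leqP => T; rewrite inE => /orP[] /imsetP[S SB ->].
  by rewrite card_mlift leq_max (leq_bigmax_cond _ SB).
by rewrite card_mliftX leq_max ltnS (leq_bigmax_cond _ SB) orbT.
Qed.

End ANFLift.

Lemma anf_sum_symdiff n (A B : {set {set 'I_n}}) x :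
  anf_sum ((A :\: B) :|: (B :\: A)) x = anf_sum A x (+) anf_sum B x.
Proof.
rewrite /anf_sum !(big_mkcond (fun S => S \in _)) -big_split /=.
apply: eq_bigr => S _; rewrite !inE.
by case: (S \in A); case: (S \in B); case: (meval S x).
Qed.

Section BoolFun.
Variable n : nat.

Definition badd (h g : BF n) : BF n := [ffun x => h x (+) g x].
Definition brestr (H : BF n.+1) b : BF n := [ffun x => H (prcons x b)].
Definition bjoin (h0 h1 : BF n) : BF n.+1 :=
  [ffun y : point n.+1 => if y ord_max then h1 (ptrunc y) else h0 (ptrunc y)].

Lemma baddC (h g : BF n) : badd h g = badd g h.
Proof. by apply/ffunP => x; rewrite !ffunE addbC. Qed.

Lemma badd0 (h : BF n) : badd (bconst n false) h = h.
Proof. by apply/ffunP => x; rewrite !ffunE. Qed.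

Lemma badd1 (h : BF n) : badd (bconst n true) h = bcompl h.
Proof. by apply/ffunP => x; rewrite !ffunE. Qed.

Lemma baddKl (h g : BF n) : badd h (badd h g) = g.
Proof. by apply/ffunP => x; rewrite !ffunE addKb. Qed.

Lemma badd_eq0 (h g : BF n) : (badd h g == bconst n false) = (h == g).
Proof.
apply/eqP/eqP => [/ffunP hg | ->]; last by apply/ffunP => x; rewrite !ffunE addbb.
by apply/ffunP => x; move: (hg x); rewrite !ffunE; case: (h x); case: (g x).
Qed.

Lemma bmulr0 (h : BF n) : bmul h (bconst n false) = bconst n false.
Proof. by apply/ffunP => x; rewrite !ffunE andbF. Qed.

Lemma bmulr1 (h : BF n) : bmul h (bconst n true) = h.
Proof. by apply/ffunP => x; rewrite !ffunE andbT. Qed.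

Lemma bcompl_eq_const (h : BF n) b : (bcompl h == bconst n b) = (h == bconst n (~~ b)).
Proof.
apply/eqP/eqP => [/ffunP E | ->]; apply/ffunP => x; last by rewrite !ffunE negbK.
by move: (E x); rewrite !ffunE => <-; rewrite negbK.
Qed.

Lemma eq_bconst b c : (bconst n b == bconst n c) = (b == c).
Proof. by apply/eqP/eqP => [/ffunP/(_ [ffun => false]) | ->]; rewrite ?ffunE. Qed.

Lemma bjoin_prcons (h0 h1 : BF n) x b : bjoin h0 h1 (prcons x b) = if b then h1 x else h0 x.
Proof. by rewrite ffunE prcons_max ptrunc_rcons. Qed.

Lemma eq_bf_prcons (H K : BF n.+1) : (forall x b, H (prcons x b) = K (prcons x b)) -> H = K.
Proof. by move=> E; apply/ffunP => y; rewrite -[y]prcons_trunc E. Qed.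

Lemma bjoin_brestr (H : BF n.+1) : bjoin (brestr H false) (brestr H true) = H.
Proof. by apply: eq_bf_prcons => x [|]; rewrite bjoin_prcons ffunE. Qed.

Lemma bjoin_eq_const (h0 h1 : BF n) c :
  (bjoin h0 h1 == bconst n.+1 c) = (h0 == bconst n c) && (h1 == bconst n c).
Proof.
apply/eqP/andP => [E | [/eqP-> /eqP->]]; last first.
  by apply: eq_bf_prcons => x b; rewrite bjoin_prcons !ffunE; case: b.
have E_at x b : (if b then h1 x else h0 x) = c by rewrite -bjoin_prcons E ffunE.
by split; apply/eqP/ffunP => x; rewrite ffunE; [apply: (E_at x false) | apply: (E_at x true)].
Qed.

Lemma bmul_bjoin (h0 h1 g0 g1 : BF n) :
  bmul (bjoin h0 h1) (bjoin g0 g1) = bjoin (bmul h0 g0) (bmul h1 g1).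
Proof. by apply: eq_bf_prcons => x b; rewrite !(ffunE, bjoin_prcons); case: b. Qed.

Lemma is_anf_bjoin (h0 h1 : BF n) A :
  is_anf (bjoin h0 h1) A = is_anf h0 (anf_low A) && is_anf (badd h0 h1) (anf_high A).
Proof.
apply/is_anfP/andP => [E | [/is_anfP E0 /is_anfP E1] y]; last first.
  rewrite -[y]prcons_trunc; move: (ptrunc y) (y ord_max) => x b.
  by rewrite anf_sum_prcons bjoin_prcons E0 E1 ffunE; case: b; rewrite ?addKb ?addbF.
split; apply/is_anfP => x; have := E (prcons x false); have := E (prcons x true).
  by rewrite !anf_sum_prcons !bjoin_prcons addbF.
by rewrite !anf_sum_prcons !bjoin_prcons addbF ffunE => <- <-; rewrite addKb.
Qed.

End BoolFun.

Lemma fbar_bjoin n (f : BF n) : fbar f = bjoin f (bcompl f).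
Proof. by apply/ffunP => y; rewrite !ffunE; case: (y ord_max). Qed.

Lemma anf_exists n (h : BF n) : exists A, is_anf h A.
Proof.
elim: n h => [|n IHn] h.
  have -> : h = bconst 0 (h [ffun => false]).
    by apply/ffunP => x; rewrite ffunE; congr (h _); apply/ffunP => -[].
  by eexists; apply: anf_bconst.
rewrite -(bjoin_brestr h).
have [B hB] := IHn (brestr h false).
have [C hC] := IHn (badd (brestr h false) (brestr h true)).
by exists (anf_davio B C); rewrite is_anf_bjoin anf_low_davio anf_high_davio hB hC.
Qed.

(** * Algebraic degree *)

Section Degree.
Variable n : nat.

Lemma bdeg_le (h : BF n) A : is_anf h A -> bdeg h <= anf_deg A.
Proof. exact: (@bigmin_le_cond _ nat _ n A (is_anf h) (@anf_deg n)). Qed.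

Lemma bdeg_anf (h : BF n) : exists2 A, is_anf h A & anf_deg A <= bdeg h.
Proof.
have [A0 hA0] := anf_exists h.
rewrite /bdeg (@bigmin_eq_arg _ nat _ n A0 (is_anf h) (@anf_deg n)) // => [|A _].
  by case: (arg_minP (@anf_deg n) hA0) => A hA _; exists A.
exact: anf_deg_le.
Qed.

Lemma bdeg_bconst b : bdeg (bconst n b) = 0.
Proof.
apply/eqP; rewrite -leqn0; apply: leq_trans (bdeg_le (anf_bconst n b)) _.
by case: b; rewrite /anf_deg ?big_set0 ?big_set1 ?cards0.
Qed.

Lemma bdeg_badd (h g : BF n) : bdeg (badd h g) <= maxn (bdeg h) (bdeg g).
Proof.
have [A /is_anfP hA dA] := bdeg_anf h; have [B /is_anfP gB dB] := bdeg_anf g.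
have hgAB : is_anf (badd h g) ((A :\: B) :|: (B :\: A)).
  by apply/is_anfP => x; rewrite anf_sum_symdiff hA gB ffunE.
apply: leq_trans (bdeg_le hgAB) _; apply/bigmax_leqP => S; rewrite !inE.
case/orP => /andP[_ SA]; rewrite leq_max.
  by rewrite (leq_trans (leq_bigmax_cond _ SA) dA).
by rewrite (leq_trans (leq_bigmax_cond _ SA) dB) orbT.
Qed.

Lemma bdeg_bcompl (h : BF n) : bdeg (bcompl h) = bdeg h.
Proof.
have le_compl (g : BF n) : bdeg (bcompl g) <= bdeg g.
  by rewrite -badd1; apply: leq_trans (bdeg_badd _ _) _; rewrite bdeg_bconst max0n.
have bcomplK : involutive (@bcompl n) by move=> g; apply/ffunP => x; rewrite !ffunE negbK.
by apply/eqP; rewrite eqn_leq le_compl -{1}(bcomplK h) le_compl.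
Qed.

End Degree.

Section BjoinDegree.
Variable n : nat.

Lemma bdeg_bjoin_le (h0 h1 : BF n) :
  bdeg (bjoin h0 h1) <= maxn (bdeg h0) (bdeg (badd h0 h1)).+1.
Proof.
have [B hB dB] := bdeg_anf h0; have [C hC dC] := bdeg_anf (badd h0 h1).
have hBC : is_anf (bjoin h0 h1) (anf_davio B C).
  by rewrite is_anf_bjoin anf_low_davio anf_high_davio hB hC.
apply: leq_trans (bdeg_le hBC) _; apply: leq_trans (anf_deg_davio B C) _.
by rewrite geq_max !leq_max dB ltnS dC orbT.
Qed.

Lemma bdeg_bjoin_ge_l (h0 h1 : BF n) : bdeg h0 <= bdeg (bjoin h0 h1).
Proof.
have [A] := bdeg_anf (bjoin h0 h1); rewrite is_anf_bjoin => /andP[hA _] dA.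
exact: leq_trans (bdeg_le hA) (leq_trans (anf_deg_low A) dA).
Qed.

Lemma bdeg_bjoin_deriv (h0 h1 : BF n) : h0 != h1 ->
  (bdeg (badd h0 h1)).+1 <= bdeg (bjoin h0 h1).
Proof.
move=> h01; have [A] := bdeg_anf (bjoin h0 h1); rewrite is_anf_bjoin => /andP[_ hA] dA.
have [A1_0 | [S SA1]] := set_0Vmem (anf_high A).
  move/is_anfP: hA; rewrite A1_0 => hA; case/eqP: h01; apply/ffunP => x.
  by move: (hA x); rewrite /anf_sum big_set0 ffunE; case: (h0 x); case: (h1 x).
apply: leq_trans dA; apply: leq_ltn_trans (bdeg_le hA) _.
have := anf_deg_high_mem SA1.
suff : anf_deg (anf_high A) <= (anf_deg A).-1 by lia.
by apply/bigmax_leqP => T /anf_deg_high_mem; lia.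
Qed.

Lemma bdeg_bjoin_deriv_le (h0 h1 : BF n) : bdeg (badd h0 h1) <= bdeg (bjoin h0 h1).
Proof.
have [h01 | /bdeg_bjoin_deriv/ltnW //] := eqVneq h0 h1.
by move/eqP: h01; rewrite -badd_eq0 => /eqP->; rewrite bdeg_bconst.
Qed.

Lemma bdeg_bjoin_ge_r (h0 h1 : BF n) : bdeg h1 <= bdeg (bjoin h0 h1).
Proof.
rewrite -{1}(baddKl h0 h1); apply: leq_trans (bdeg_badd _ _) _.
by rewrite geq_max bdeg_bjoin_ge_l bdeg_bjoin_deriv_le.
Qed.

Lemma bdeg_bjoin0r (h : BF n) : bdeg (bjoin h (bconst n false)) <= (bdeg h).+1.
Proof.
by apply: leq_trans (bdeg_bjoin_le _ _) _; rewrite baddC badd0 geq_max leqnSn leqnn.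
Qed.

Lemma bdeg_bjoin0l (h : BF n) : bdeg (bjoin (bconst n false) h) <= (bdeg h).+1.
Proof. by apply: leq_trans (bdeg_bjoin_le _ _) _; rewrite badd0 bdeg_bconst. Qed.

End BjoinDegree.

(** * Fast algebraic immunity *)

Section FAI.
Variable n : nat.

Lemma FAI_le (h g : BF n) : bmul h g != bconst n false -> g != bconst n true ->
  FAI h <= bdeg g + bdeg (bmul h g).
Proof.
move=> hg g1; apply: (@bigmin_le_cond _ nat _ _ g
  (fun g => (bmul h g != bconst n false) && (g != bconst n true))).
by rewrite hg g1.
Qed.

Lemma FAI_ge (h : BF n) c : c <= (n.*2).+1 ->
  (forall g, bmul h g != bconst n false -> g != bconst n true ->
     c <= bdeg g + bdeg (bmul h g)) ->
  c <= FAI h.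
Proof. by move=> c_le c_cost; apply: (@le_bigmin _ nat) => // g /andP[]; apply: c_cost. Qed.

Lemma FAI_max (h : BF n) : FAI h <= (n.*2).+1.
Proof. exact: (@bigmin_le_id _ nat). Qed.

End FAI.

Section UpperBound.
Variable n : nat.

Lemma FAI_bjoin_le_l (h0 h1 g : BF n) : bmul h0 g != bconst n false ->
  FAI (bjoin h0 h1) <= (bdeg g + bdeg (bmul h0 g)).+2.
Proof.
move=> h0g; have G_neq1 : bjoin g (bconst n false) != bconst n.+1 true.
  by rewrite bjoin_eq_const eq_bconst andbF.
have HG_neq0 : bmul (bjoin h0 h1) (bjoin g (bconst n false)) != bconst n.+1 false.
  by rewrite bmul_bjoin bjoin_eq_const (negbTE h0g).
apply: leq_trans (FAI_le HG_neq0 G_neq1) _; rewrite bmul_bjoin bmulr0.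
by have := bdeg_bjoin0r g; have := bdeg_bjoin0r (bmul h0 g); lia.
Qed.

Lemma FAI_bjoin_le_r (h0 h1 g : BF n) : bmul h1 g != bconst n false ->
  FAI (bjoin h0 h1) <= (bdeg g + bdeg (bmul h1 g)).+2.
Proof.
move=> h1g; have G_neq1 : bjoin (bconst n false) g != bconst n.+1 true.
  by rewrite bjoin_eq_const eq_bconst.
have HG_neq0 : bmul (bjoin h0 h1) (bjoin (bconst n false) g) != bconst n.+1 false.
  by rewrite bmul_bjoin bjoin_eq_const (negbTE h1g) andbF.
apply: leq_trans (FAI_le HG_neq0 G_neq1) _; rewrite bmul_bjoin bmulr0.
by have := bdeg_bjoin0l g; have := bdeg_bjoin0l (bmul h1 g); lia.
Qed.

Lemma FAI_bjoin_l (h0 h1 : BF n) : FAI (bjoin h0 h1) <= (FAI h0).+2.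
Proof.
rewrite -add2n -leq_subLR; apply: FAI_ge => [|g h0g _].
  by have := FAI_max (bjoin h0 h1); rewrite doubleS; lia.
by rewrite leq_subLR add2n FAI_bjoin_le_l.
Qed.

Lemma FAI_bjoin_r (h0 h1 : BF n) : FAI (bjoin h0 h1) <= (FAI h1).+2.
Proof.
rewrite -add2n -leq_subLR; apply: FAI_ge => [|g h1g _].
  by have := FAI_max (bjoin h0 h1); rewrite doubleS; lia.
by rewrite leq_subLR add2n FAI_bjoin_le_r.
Qed.

End UpperBound.

Lemma FAI_le_bdeg_add2 n (f : BF n.+1) : f != bconst n.+1 false -> FAI f <= (bdeg f).+2.
Proof.
rewrite -(bjoin_brestr f) bjoin_eq_const negb_and => /orP[f0 | f1].
  apply: leq_trans (FAI_bjoin_le_l _ (g := bconst n true) _) _; rewrite bmulr1 //.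
  by rewrite bdeg_bconst ltnS ltnS bdeg_bjoin_ge_l.
apply: leq_trans (FAI_bjoin_le_r _ (g := bconst n true) _) _; rewrite bmulr1 //.
by rewrite bdeg_bconst ltnS ltnS bdeg_bjoin_ge_r.
Qed.

Lemma FAI_le_annihilated n (k r : BF n) : bmul k r = bconst n false ->
  k != bconst n false -> r != bconst n false -> FAI k <= bdeg r + bdeg k.
Proof.
move=> kr0 k_neq0 r_neq0; have k_r' : bmul k (bcompl r) = k.
  by apply/ffunP => x; move/ffunP/(_ x): kr0; rewrite !ffunE; case: (k x); case: (r x).
rewrite -bdeg_bcompl -{2}k_r'; apply: FAI_le; first by rewrite k_r'.
by rewrite bcompl_eq_const.
Qed.

Section LowerBound.
Variables (n : nat) (f : BF n.+1).
Hypotheses (f_neq0 : f != bconst n.+1 false) (fc_neq0 : bcompl f != bconst n.+1 false).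
Local Notation fc := (bcompl f).

Lemma fbar_cost_lb_low1 (b : BF n.+1) : b != bconst n.+1 true ->
  minn (FAI f) (FAI fc).+1 <= bdeg (bjoin (bconst n.+1 true) b) + bdeg (bjoin f (bmul fc b)).
Proof.
move=> b_neq1; have dG : (bdeg b).+1 <= bdeg (bjoin (bconst n.+1 true) b).
  by rewrite -bdeg_bcompl -badd1 bdeg_bjoin_deriv // eq_sym.
have [fcb0 | fcb_neq0] := eqVneq (bmul fc b) (bconst n.+1 false); last first.
  by have := FAI_le fcb_neq0 b_neq1; have := bdeg_bjoin_ge_r f (bmul fc b); lia.
have dF : (bdeg f).+1 <= bdeg (bjoin f (bmul fc b)).
  by rewrite fcb0; have := bdeg_bjoin_deriv f_neq0; rewrite baddC badd0.
have [_ | b_neq0] := eqVneq b (bconst n.+1 false).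
  by have := FAI_le_bdeg_add2 f_neq0; lia.
by have := FAI_le_annihilated fcb0 fc_neq0 b_neq0; rewrite bdeg_bcompl; lia.
Qed.

Lemma fbar_cost_lb_low_annihilated (a b : BF n.+1) : bmul f a = bconst n.+1 false ->
  bmul fc b != bconst n.+1 false -> bjoin a b != bconst n.+2 true ->
  minn (FAI f) (FAI fc).+1 <= bdeg (bjoin a b) + bdeg (bjoin (bconst n.+1 false) (bmul fc b)).
Proof.
move=> fa0 fcb_neq0 G_neq1.
have dF : (bdeg (bmul fc b)).+1 <= bdeg (bjoin (bconst n.+1 false) (bmul fc b)).
  by rewrite -{1}(badd0 (bmul fc b)) bdeg_bjoin_deriv // eq_sym.
have [b1 | b_neq1] := eqVneq b (bconst n.+1 true); last first.
  by have := FAI_le fcb_neq0 b_neq1; have := bdeg_bjoin_ge_r a b; lia.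
move: G_neq1 dF; rewrite b1 bmulr1 bdeg_bcompl bjoin_eq_const eqxx andbT => a_neq1 dF.
have dG : (bdeg a).+1 <= bdeg (bjoin a (bconst n.+1 true)).
  by rewrite -bdeg_bcompl -badd1 baddC bdeg_bjoin_deriv.
have [_ | a_neq0] := eqVneq a (bconst n.+1 false).
  by have := FAI_le_bdeg_add2 f_neq0; lia.
by have := FAI_le_annihilated fa0 f_neq0 a_neq0; lia.
Qed.

Lemma fbar_cost_lb (a b : BF n.+1) :
  bjoin a b != bconst n.+2 true -> bjoin (bmul f a) (bmul fc b) != bconst n.+2 false ->
  minn (FAI f) (FAI fc).+1 <= bdeg (bjoin a b) + bdeg (bjoin (bmul f a) (bmul fc b)).
Proof.
move=> G_neq1 FG_neq0.
have [fa0 | fa_neq0] := eqVneq (bmul f a) (bconst n.+1 false).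
  rewrite fa0 in FG_neq0 *; apply: fbar_cost_lb_low_annihilated => //.
  by move: FG_neq0; rewrite bjoin_eq_const eqxx.
have [a1 | a_neq1] := eqVneq a (bconst n.+1 true).
  subst a; rewrite bmulr1; apply: fbar_cost_lb_low1.
  by move: G_neq1; rewrite bjoin_eq_const eqxx.
have := FAI_le fa_neq0 a_neq1; have := bdeg_bjoin_ge_l a b.
by have := bdeg_bjoin_ge_l (bmul f a) (bmul fc b); lia.
Qed.

End LowerBound.

Theorem corollary2 (m : nat) (f : BF m) :
  (exists x y, f x != f y) ->
  minn (FAI f) (FAI (bcompl f)).+1 <= FAI (fbar f) <= (FAIc f).+2.
Proof.
case: m f => [|n] f [x [y fxy]].
  by move: fxy; rewrite (_ : x = y) ?eqxx //; apply/ffunP => -[].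
have f_nonconst b : f != bconst n.+1 b by apply: contra fxy => /eqP->; rewrite !ffunE.
have fc_neq0 : bcompl f != bconst n.+1 false by rewrite bcompl_eq_const f_nonconst.
rewrite fbar_bjoin; apply/andP; split; last first.
  by have := FAI_bjoin_l f (bcompl f); have := FAI_bjoin_r f (bcompl f); rewrite /FAIc; lia.
apply: FAI_ge => [|G FG_neq0 G_neq1].
  by have := FAI_max f; rewrite !doubleS; lia.
rewrite -(bjoin_brestr G) in FG_neq0 G_neq1 *; rewrite bmul_bjoin in FG_neq0 *.
exact: fbar_cost_lb (f_nonconst false) fc_neq0 _ _ G_neq1 FG_neq0.
Qed.
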